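(* There is a function $l:\mathbb{N}\to\mathbb{N}$ such that for every $m$ and every graph $G$, every equivalence class of $\cong_m$ on $V(G)$ is a union of connected components of the graph of $\cong^D_{l(m)}$ on $V(G)$.
   Context: Graphs are finite, simple, undirected, loopless, possibly labelled with unary predicates from a finite set. $N(u)$ is the neighbourhood of $u$ and $D(u,v):=N(u)\,\Delta\,N(v)$. $u\cong_m v$ means Duplicator wins the standard $m$-round Ehrenfeucht–Fraïssé game on $(G,u)$ and $(G,v)$ (equivalently, $u,v$ satisfy the same FO formulas of quantifier rank $m$). Differential game from $(\bar a,\bar b)$ on a single graph $G$: in each round, with current tuples $(a_1,\dots,a_n),(b_1,\dots,b_n)$, Spoiler chooses $i\le n$ and $v\in D(a_i,b_i)$ and declares whether $v$ becomes $a_{n+1}$ or $b_{n+1}$ (if all $D(a_i,b_i)$ are empty, Duplicator wins); Duplicator answers with a vertex $w\in D(a_i,b_i)$ (same $i$), which becomes the other of $b_{n+1},a_{n+1}$. After the rounds, Duplicator wins iff $a_i\mapsto b_i$ is a label-preserving isomorphism between the induced subgraphs on the $a$'s and $b$'s (equalities, adjacencies, labels preserved). $u\cong^D_m v$ means Duplicator has a winning strategy in the $m$-round differential game from $((u),(v))$. The graph of this relation has vertex set $V(G)$ and an edge between distinct $u,v$ iff $u\cong^D_m v$. *)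

From mathcomp Require Import all_boot.
From Stdlib Require Import Relations.
Set Implicit Arguments. Unset Strict Implicit. Unset Printing Implicit Defensive.

Section Games.
(* A labelled graph: vertex set T (finite), adjacency e (symmetric,
   irreflexive -- imposed as hypotheses in the theorem), and a finite set L of
   unary predicates, lab p x meaning that vertex x carries label p. *)
Variables (T : finType) (L : finType) (e : rel T) (lab : L -> pred T).

Definition nbhd (u : T) : {set T} := [set x | e u x].
Definition Dset (u v : T) : {set T} :=
  (nbhd u :\: nbhd v) :|: (nbhd v :\: nbhd u).

Definition piso (a b : seq T) : Prop :=
  size a = size b /\
  forall p q, p \in zip a b -> q \in zip a b ->
    [/\ (p.1 == q.1) = (p.2 == q.2), e p.1 q.1 = e p.2 q.2 &
        forall l : L, lab l p.1 = lab l p.2].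

Fixpoint ef (k : nat) (a b : seq T) : Prop :=
  match k with
  | 0 => piso a b
  | k'.+1 =>
      (forall x, exists y, ef k' (rcons a x) (rcons b y)) /\
      (forall y, exists x, ef k' (rcons a x) (rcons b y))
  end.

Definition ef_equiv (m : nat) (u v : T) : Prop := ef m [:: u] [:: v].

(* The winning condition is checked
   on the final position; the conjunct [piso a b] at each stage is
   equivalent to this (partial isomorphisms are closed under restriction to
   prefixes) and also handles the case where Spoiler has no legal move
   (all D(a_i,b_i) empty), in which the game stops at the current position. *)
Fixpoint dgame (k : nat) (a b : seq T) : Prop :=
  match k with
  | 0 => piso a b
  | k'.+1 =>
      piso a b /\
      forall p, p \in zip a b -> forall v, v \in Dset p.1 p.2 ->
        (exists2 w, w \in Dset p.1 p.2 & dgame k' (rcons a v) (rcons b w)) /\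
        (exists2 w, w \in Dset p.1 p.2 & dgame k' (rcons a w) (rcons b v))
  end.

Definition dgame_equiv (m : nat) (u v : T) : Prop := dgame m [:: u] [:: v].

Definition dgraph_edge (m : nat) (u v : T) : Prop :=
  u <> v /\ (dgame_equiv m u v \/ dgame_equiv m v u).

Definition dgraph_connected (m : nat) (u v : T) : Prop :=
  clos_refl_trans T (dgraph_edge m) u v.

End Games.

From Stdlib Require Import Classical.
From mathcomp Require Import all_boot.
Set Implicit Arguments. Unset Strict Implicit. Unset Printing Implicit Defensive.

(* Let U be the union of the sets D(a_i, b_i) over the pairs of a position
   (a, b).  A vertex x outside U is adjacent to a_i iff it is adjacent to b_i,
   so in an EF round Duplicator may answer x by x itself or, when x = b_i, by
   a_i: in a position won for one more differential round,
   e(b_i, a_j) = e(a_i, b_j).  Such a fresh answer keeps the differential game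
   won as long as x stays outside U.  If instead some differential move (v, w)
   brings x into D(v, w), then x is answered by a differential move at that
   later position; forgetting the extra pairs only helps in the EF game.
   Hence a position won for 2k + 1 differential rounds (and closed under a
   swap invariant) wins one EF round and reaches a position won for k rounds,
   so u ≅^D_{2^m - 1} v implies u ≅_m v.  Since ≅_m is an equivalence
   relation, it contains the components of the graph of ≅^D_{2^m - 1}. *)

Section ZipPairs.
Variables S1 S2 S3 : eqType.
Implicit Types (a : seq S1) (b : seq S2) (c : seq S3).

Lemma mem_zip_swap a b x y : ((x, y) \in zip a b) = ((y, x) \in zip b a).
Proof.
by elim: a b => [|x0 a IH] [|y0 b] //=; rewrite !inE IH !xpair_eqE andbC.
Qed.

Lemma mem_zipl a b x y : (x, y) \in zip a b -> x \in a.
Proof.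
elim: a b => [|x0 a IH] [|y0 b] //=; rewrite !inE.
by case/orP=> [/eqP[-> _]|/IH ->]; rewrite ?eqxx ?orbT.
Qed.

Lemma mem_zipr a b x y : (x, y) \in zip a b -> y \in b.
Proof.
elim: a b => [|x0 a IH] [|y0 b] //=; rewrite !inE.
by case/orP=> [/eqP[_ ->]|/IH ->]; rewrite ?eqxx ?orbT.
Qed.

Lemma zip_partnerl a b x : size a = size b -> x \in a ->
  exists y, (x, y) \in zip a b.
Proof.
elim: a b => [|x0 a IH] [|y0 b] //= [/IH{}IH]; rewrite inE.
case/orP=> [/eqP->|/IH[y xy]]; first by exists y0; rewrite inE eqxx.
by exists y; rewrite inE xy orbT.
Qed.

Lemma zip_partnerr a b y : size a = size b -> y \in b ->
  exists x, (x, y) \in zip a b.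
Proof.
elim: a b => [|x0 a IH] [|y0 b] //= [/IH{}IH]; rewrite inE.
case/orP=> [/eqP->|/IH[x xy]]; first by exists x0; rewrite inE eqxx.
by exists x; rewrite inE xy orbT.
Qed.

Lemma zip_comp a b c x z : size a = size b -> size b = size c ->
  (x, z) \in zip a c -> exists2 y, (x, y) \in zip a b & (y, z) \in zip b c.
Proof.
elim: a b c => [|x0 a IH] [|y0 b] [|z0 c] //= [/IH{}IH] [/IH{}IH]; rewrite inE.
case/orP=> [/eqP[-> ->]|/IH[y xy yz]]; first by exists y0; rewrite inE eqxx.
by exists y; rewrite inE ?xy ?yz orbT.
Qed.

Lemma mem_zip_rcons a b x y p : size a = size b ->
  (p \in zip (rcons a x) (rcons b y)) = (p == (x, y)) || (p \in zip a b).
Proof. by move=> sab; rewrite zip_rcons // mem_rcons inE. Qed.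

Lemma eq_size_rcons a b x y : size a = size b ->
  size (rcons a x) = size (rcons b y).
Proof. by rewrite !size_rcons => ->. Qed.

Lemma subset_zip_rcons a b x y : size a = size b ->
  {subset zip a b <= zip (rcons a x) (rcons b y)}.
Proof. by move=> sab p pab; rewrite mem_zip_rcons // pab orbT. Qed.

Lemma notin_zipl a b x u v :
  x \notin a -> (u, v) \in zip a b -> (u == x) = false.
Proof. by move=> xa /mem_zipl ua; apply: contraNF xa => /eqP <-. Qed.

Lemma notin_zipr a b y u v :
  y \notin b -> (u, v) \in zip a b -> (v == y) = false.
Proof. by move=> yb /mem_zipr vb; apply: contraNF yb => /eqP <-. Qed.

Lemma rcons_subset_zip a b a' b' x y :
  size a = size b -> size a' = size b' -> {subset zip a b <= zip a' b'} ->
  {subset zip (rcons a x) (rcons b y) <= zip (rcons a' x) (rcons b' y)}.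
Proof.
move=> sab sab' sub p; rewrite !mem_zip_rcons //.
by case/orP=> [->|/sub->]; rewrite ?orbT.
Qed.

End ZipPairs.

Lemma zip_diag (S : eqType) (a : seq S) x y : (x, y) \in zip a a -> x = y.
Proof. by elim: a => [|x0 a IH] //=; rewrite inE => /orP[/eqP[-> ->]|/IH]. Qed.

Section Games.
Variables (T L : finType) (e : rel T) (lab : L -> pred T).
Hypothesis e_sym : symmetric e.
Implicit Types (a b : seq T) (x y : T).

Local Notation D := (Dset e).
Local Notation piso := (piso e lab).
Local Notation ef := (ef e lab).
Local Notation dgame := (dgame e lab).

Lemma mem_Dset u v x : (x \in D u v) = (e u x != e v x).
Proof. by rewrite /Dset /nbhd !inE; case: (e u x); case: (e v x). Qed.

Lemma DsetC u v : D u v = D v u.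
Proof. by rewrite /Dset setUC. Qed.

Lemma Dsetxx u : D u u = set0.
Proof. by apply/setP => x; rewrite mem_Dset eqxx inE. Qed.

Lemma piso_size a b : piso a b -> size a = size b.
Proof. by case. Qed.

Lemma piso_eq a b c d c' d' : piso a b ->
  (c, d) \in zip a b -> (c', d') \in zip a b -> (c == c') = (d == d').
Proof. by case=> _ iso cd cd'; case: (iso _ _ cd cd'). Qed.

Lemma piso_adj a b c d c' d' : piso a b ->
  (c, d) \in zip a b -> (c', d') \in zip a b -> e c c' = e d d'.
Proof. by case=> _ iso cd cd'; case: (iso _ _ cd cd'). Qed.

Lemma piso_lab a b c d l : piso a b -> (c, d) \in zip a b -> lab l c = lab l d.
Proof. by case=> _ iso cd; case: (iso _ _ cd cd). Qed.

Lemma piso_subpos a b a' b' : size a = size b ->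
  {subset zip a b <= zip a' b'} -> piso a' b' -> piso a b.
Proof.
by move=> sab sub [_ iso]; split=> // p q /sub p' /sub q'; apply: iso.
Qed.

Lemma piso_sym a b : piso a b -> piso b a.
Proof.
case=> sab iso; split=> // -[c d] [c' d'].
rewrite -!(mem_zip_swap a) => /iso{}iso /iso[/= E A lE].
by split=> // l; rewrite lE.
Qed.

Lemma piso_refl a : piso a a.
Proof. by split=> // -[c d] [c' d'] /zip_diag/= -> /zip_diag/= ->. Qed.

Lemma piso_trans a b c : piso a b -> piso b c -> piso a c.
Proof.
move=> ab bc; have sab := piso_size ab; have sbc := piso_size bc.
split=> [|[x z] [x' z']]; first by rewrite sab.
case/(zip_comp sab sbc)=> y xy yz /(zip_comp sab sbc)[y' xy' yz'].
split=> [|/=|l /=].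
- by rewrite (piso_eq ab xy xy') (piso_eq bc yz yz').
- by rewrite (piso_adj ab xy xy') (piso_adj bc yz yz').
- by rewrite (piso_lab l ab xy) (piso_lab l bc yz).
Qed.

Lemma piso_rcons a b x y : piso a b ->
  (forall c d, (c, d) \in zip a b -> (x == c) = (y == d) /\ e x c = e y d) ->
  e x x = e y y -> (forall l, lab l x = lab l y) ->
  piso (rcons a x) (rcons b y).
Proof.
move=> [sab iso] new xx xl; split; first by rewrite !size_rcons sab.
move=> [c d] [c' d']; rewrite !mem_zip_rcons //.
case/orP=> [/eqP[-> ->]|cd]; case/orP=> [/eqP[-> ->]|cd'] //=.
- by rewrite !eqxx.
- by case: (new _ _ cd').
- case: (new _ _ cd) => E A; split; last by case: (iso _ _ cd cd).
    by rewrite eq_sym E eq_sym.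
  by rewrite e_sym A e_sym.
- exact: (iso _ _ cd cd').
Qed.

Lemma ef_subpos k a b a' b' : size a = size b -> size a' = size b' ->
  {subset zip a b <= zip a' b'} -> ef k a' b' -> ef k a b.
Proof.
elim: k a b a' b' => [|k IH] a b a' b' sab sab' sub /=.
  exact: piso_subpos.
have step x y : ef k (rcons a' x) (rcons b' y) -> ef k (rcons a x) (rcons b y).
  exact: IH (eq_size_rcons _ _ sab) (eq_size_rcons _ _ sab')
            (rcons_subset_zip sab sab' sub).
case=> fwd bwd; split=> [x|y].
  by have [y /step] := fwd x; exists y.
by have [x /step] := bwd y; exists x.
Qed.

Lemma ef_sym k a b : ef k a b -> ef k b a.
Proof.
elim: k a b => [|k IH] a b /=; first exact: piso_sym.
case=> fwd bwd; split=> x.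
  by have [y yx] := bwd x; exists y; apply: IH.
by have [y xy] := fwd x; exists y; apply: IH.
Qed.

Lemma ef_refl k a : ef k a a.
Proof.
by elim: k a => [|k IH] a /=; [apply: piso_refl | split=> x; exists x].
Qed.

Lemma ef_trans k a b c : ef k a b -> ef k b c -> ef k a c.
Proof.
elim: k a b c => [|k IH] a b c /=; first exact: piso_trans.
case=> ab_fwd ab_bwd [bc_fwd bc_bwd]; split=> [x|z].
  have [y xy] := ab_fwd x; have [z yz] := bc_fwd y.
  by exists z; apply: IH xy yz.
have [y yz] := bc_bwd z; have [x xy] := ab_bwd y.
by exists x; apply: IH xy yz.
Qed.

Lemma dgame_piso k a b : dgame k a b -> piso a b.
Proof. by case: k => [|k] //= []. Qed.

Lemma dgame_subpos k a b a' b' : size a = size b ->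
  {subset zip a b <= zip a' b'} -> dgame k a' b' -> dgame k a b.
Proof.
elim: k a b a' b' => [|k IH] a b a' b' sab sub /=; first exact: piso_subpos.
case=> iso' play; split=> [|p /sub p' v pv]; first exact: piso_subpos iso'.
have sab' := piso_size iso'.
have [[w pw win] [w' pw' win']] := play p p' v pv.
have step x y : dgame k (rcons a' x) (rcons b' y) ->
    dgame k (rcons a x) (rcons b y).
  exact: IH (eq_size_rcons _ _ sab) (rcons_subset_zip sab sab' sub).
by split; [exists w | exists w'] => //; apply: step.
Qed.

Lemma dgame_sym k a b : dgame k a b -> dgame k b a.
Proof.
elim: k a b => [|k IH] a b /=; first exact: piso_sym.
case=> iso play; split=> [|[c d]]; first exact: piso_sym.
rewrite -mem_zip_swap => dc v; rewrite /= DsetC => vD.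
have [[w wD win] [w' wD' win']] := play _ dc v vD.
by split; [exists w' | exists w] => //; apply: IH.
Qed.

Lemma dgame_leq k n a b : k <= n -> dgame n a b -> dgame k a b.
Proof.
elim: k n a b => [|k IH] [|n] a b //=; first by move=> _ [].
rewrite ltnS => kn [iso play]; split=> // p pab v pv.
have [[w pw win] [w' pw' win']] := play p pab v pv.
by split; [exists w | exists w'] => //; [exact: IH kn win | exact: IH kn win'].
Qed.

(* If Spoiler plays c' from D(c, d), Duplicator must answer d', the vertex
   already paired with c'. *)
Lemma dgame_mem_Dset k a b c d c' d' : dgame k.+1 a b ->
  (c, d) \in zip a b -> (c', d') \in zip a b -> (c' \in D c d) = (d' \in D c d).
Proof.
move=> [iso play] cd cd'; have sab := piso_size iso.
have new_pair x y : (x, y) \in zip (rcons a x) (rcons b y).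
  by rewrite mem_zip_rcons // eqxx.
have old_pair x y : (c', d') \in zip (rcons a x) (rcons b y).
  by rewrite mem_zip_rcons // cd' orbT.
apply/idP/idP=> vD.
  have [[w wD /dgame_piso win] _] := play _ cd c' vD.
  suff -> : d' = w by [].
  by apply/eqP; rewrite -(piso_eq win (old_pair _ _) (new_pair _ _)).
have [_ [w wD /dgame_piso win]] := play _ cd d' vD.
suff -> : c' = w by [].
by apply/eqP; rewrite (piso_eq win (old_pair _ _) (new_pair _ _)).
Qed.

Lemma dgame_adj_cross k a b c d c' d' : dgame k.+1 a b ->
  (c, d) \in zip a b -> (c', d') \in zip a b -> e d c' = e c d'.
Proof.
move=> win cd cd'; have := dgame_mem_Dset win cd cd'.
rewrite !mem_Dset (piso_adj (dgame_piso win) cd cd').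
by case: (e d c'); case: (e c d'); case: (e d d').
Qed.

Definition Dunion a b : pred T :=
  [pred x | has (fun p => x \in D p.1 p.2) (zip a b)].

Lemma Dunion_Dset a b p x : p \in zip a b -> x \in D p.1 p.2 -> Dunion a b x.
Proof. by move=> pab xD; apply/hasP; exists p. Qed.

Lemma Dunion_rcons a b v w x : size a = size b ->
  Dunion (rcons a v) (rcons b w) x = Dunion a b x || (x \in D v w).
Proof. by move=> sab; rewrite /Dunion /= zip_rcons // has_rcons orbC. Qed.

Lemma DunionC a b : Dunion b a =1 Dunion a b.
Proof.
move=> x; apply/hasP/hasP=> -[[c d] cd xD]; exists (d, c);
  by rewrite 1?mem_zip_swap // DsetC.
Qed.

Lemma Dunion_pair k a b c d : dgame k.+1 a b -> (c, d) \in zip a b ->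
  Dunion a b c = Dunion a b d.
Proof.
move=> win cd; apply: eq_in_has => -[c' d'] pab.
exact: dgame_mem_Dset win pab cd.
Qed.

Lemma dgame_answer_Dunion k a b x : dgame k.+1 a b -> Dunion a b x ->
  exists2 y, Dunion a b y & dgame k (rcons a x) (rcons b y).
Proof.
move=> [_ play] /hasP[p pab xD]; have [[y yD win] _] := play p pab x xD.
by exists y => //; apply: Dunion_Dset pab yD.
Qed.

(* Ensures that the partner a_i of a vertex b_i outside the union is not on
   the b-side, so that the pair (b_i, a_i) can be added. *)
Definition swap_closed a b := forall c d, (c, d) \in zip a b ->
  ~~ Dunion a b c -> ~~ Dunion a b d -> (c \in b) || (d \in a) ->
  (d, c) \in zip a b.

Lemma swap_closed_sym a b : swap_closed a b -> swap_closed b a.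
Proof.
move=> sc c d; rewrite -mem_zip_swap !(DunionC a b) => dc cU dU cd_in.
by rewrite -mem_zip_swap; apply: sc; rewrite // orbC.
Qed.

Lemma swap_closed1 u v : swap_closed [:: u] [:: v].
Proof.
move=> c d; rewrite mem_seq1 => /eqP[-> ->] _ _.
by rewrite !mem_seq1 => /orP[]/eqP->.
Qed.

Lemma swap_closed_rcons a b v w : size a = size b -> swap_closed a b ->
  Dunion a b v -> Dunion a b w -> swap_closed (rcons a v) (rcons b w).
Proof.
move=> sab sc vU wU c d; rewrite !Dunion_rcons // mem_zip_rcons //.
case/orP=> [/eqP[-> ->]|cd]; first by rewrite vU.
rewrite !negb_or !mem_rcons !inE => /andP[cU _] /andP[dU _] cd_in.
rewrite mem_zip_rcons // (sc c d) ?orbT //.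
case/orP: cd_in => /orP[/eqP eq_new|->]; rewrite ?orbT //.
  by move: cU; rewrite eq_new wU.
by move: dU; rewrite eq_new vU.
Qed.

Definition fresh_answer a b x s :=
  [/\ x \notin a, s \notin b, ~~ Dunion a b x, ~~ Dunion a b s
    & s = x \/ (s, x) \in zip a b].

Lemma Dset_fresh_pair a b x s p v : size a = size b ->
  s = x \/ (s, x) \in zip a b ->
  p \in zip (rcons a x) (rcons b s) -> v \in D p.1 p.2 ->
  exists2 p0, p0 \in zip a b & D p0.1 p0.2 = D p.1 p.2.
Proof.
move=> sab sx; rewrite mem_zip_rcons // => /orP[/eqP-> /=|]; last by exists p.
by case: sx => [->|sx]; [rewrite Dsetxx inE | exists (s, x); rewrite // DsetC].
Qed.

Lemma Dunion_fresh_pair a b x s : size a = size b ->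
  s = x \/ (s, x) \in zip a b -> Dunion (rcons a x) (rcons b s) =1 Dunion a b.
Proof.
move=> sab sx y; rewrite Dunion_rcons //.
case: sx => [->|sx]; first by rewrite Dsetxx inE orbF.
apply/orP/idP=> [[//|yD]|->]; last by left.
by apply: Dunion_Dset sx _; rewrite DsetC.
Qed.

Lemma piso_fresh_answer k a b x s : dgame k.+1 a b -> fresh_answer a b x s ->
  piso (rcons a x) (rcons b s).
Proof.
move=> win [xa sb xU _ sx]; have iso := dgame_piso win.
have fresh c d : (c, d) \in zip a b -> (x == c) = (s == d).
  by move=> cd; rewrite eq_sym (notin_zipl xa cd) eq_sym (notin_zipr sb cd).
case: sx => [es|sx]; last first.
  apply: piso_rcons => // [c d cd||l]; last by rewrite (piso_lab l iso sx).
    by split; [apply: fresh | apply: dgame_adj_cross win sx cd].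
  by rewrite (piso_adj iso sx sx).
subst s; apply: piso_rcons => // c d cd; split; first exact: fresh.
have := contraNN (Dunion_Dset cd) xU; rewrite mem_Dset negbK /= => /eqP.
by rewrite !(e_sym _ x).
Qed.

Lemma swap_closed_fresh_answer a b x s : piso a b -> swap_closed a b ->
  fresh_answer a b x s -> swap_closed (rcons a x) (rcons b s).
Proof.
move=> iso sc [xa sb _ _ sx]; have sab := piso_size iso.
move=> c d; rewrite !Dunion_fresh_pair // !mem_zip_rcons // !mem_rcons !inE.
case/orP=> [/eqP[-> ->] _ _ _|cd cU dU].
  by case: sx => ->; rewrite ?eqxx ?orbT.
have twin : (c == s) = (d == x).
  case: sx => [es|sx]; last exact: piso_eq iso cd sx.
  by subst s; rewrite (notin_zipl xa cd) (notin_zipr sb cd).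
rewrite xpair_eqE -twin andbb.
by case/orP=> /orP[->|in_ab] //; rewrite (sc c d) ?in_ab ?orbT.
Qed.

Lemma fresh_answer_rcons k a b x s v w : dgame k.+1 (rcons a v) (rcons b w) ->
  Dunion a b v -> Dunion a b w -> x \notin D v w ->
  fresh_answer a b x s -> fresh_answer (rcons a v) (rcons b w) x s.
Proof.
move=> win vU wU xD [xa sb xU sU sx].
have [sab] : (size a).+1 = (size b).+1.
  by rewrite -(size_rcons a v) -(size_rcons b w) (piso_size (dgame_piso win)).
have new : (v, w) \in zip (rcons a v) (rcons b w).
  by rewrite mem_zip_rcons // eqxx.
have old := subset_zip_rcons v w sab.
split.
- by rewrite mem_rcons inE negb_or xa andbT; apply: contraNneq xU => ->.
- by rewrite mem_rcons inE negb_or sb andbT; apply: contraNneq sU => ->.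
- by rewrite Dunion_rcons // negb_or xU.
- rewrite Dunion_rcons // negb_or sU.
  by case: sx => [->|/old sx] //; rewrite (dgame_mem_Dset win new sx).
- by case: sx => [|/old]; [left | right].
Qed.

Definition extendable k a b x := exists y a' b',
  [/\ swap_closed a' b', dgame k a' b'
    & {subset zip (rcons a x) (rcons b y) <= zip a' b'}].

Lemma extendable_subpos k a b a' b' x : size a = size b -> size a' = size b' ->
  {subset zip a b <= zip a' b'} -> extendable k a' b' x -> extendable k a b x.
Proof.
move=> sab sab' sub [y [a'' [b'' [sc win sub']]]]; exists y, a'', b''.
by split=> // p /(rcons_subset_zip sab sab' sub)/sub'.
Qed.

Lemma extendable_Dunion k a b x : swap_closed a b -> dgame k.+1 a b ->
  Dunion a b x -> extendable k a b x.
Proof.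
move=> sc win xU; have [y yU win'] := dgame_answer_Dunion win xU.
exists y, (rcons a x), (rcons b y); split=> //.
exact: swap_closed_rcons (piso_size (dgame_piso win)) sc xU yU.
Qed.

Lemma dgame_simulate n n' a b a' b' : dgame n.+1 a b -> piso a' b' ->
  (forall p v, p \in zip a' b' -> v \in D p.1 p.2 ->
     exists2 p0, p0 \in zip a b & D p0.1 p0.2 = D p.1 p.2) ->
  (forall v w, Dunion a b v -> Dunion a b w ->
     dgame n (rcons a v) (rcons b w) -> dgame n' (rcons a' v) (rcons b' w)) ->
  dgame n'.+1 a' b'.
Proof.
move=> [_ play] iso' sameD lift; split=> // p p' v vD.
have [p0 p0ab eD] := sameD p v p' vD; rewrite -eD in vD *.
have [[w wD win] [w' wD' win']] := play p0 p0ab v vD.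
have U := Dunion_Dset p0ab.
by split; [exists w | exists w'] => //; apply: lift; rewrite ?U.
Qed.

(* Classically, either [x] can be answered at a later position where it lies
   in the union, or no differential move ever brings it there. *)
Lemma fresh_answer_wins j k a b x s : swap_closed a b ->
  dgame (j + k).+1 a b -> fresh_answer a b x s ->
  dgame j (rcons a x) (rcons b s) \/ extendable k a b x.
Proof.
elim: j a b => [|j IH] a b sc win fr.
  by left; apply: piso_fresh_answer win fr.
have [|stuck] := classic (extendable k a b x); first by right.
left; have [_ _ _ _ sx] := fr; have sab := piso_size (dgame_piso win).
apply: (dgame_simulate win (piso_fresh_answer win fr)).
  by move=> p v; apply: Dset_fresh_pair sab sx.
move=> v w vU wU win_vw.
have sc_vw := swap_closed_rcons sab sc vU wU.
have sub_vw := subset_zip_rcons v w sab.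
have ext_vw :=
  extendable_subpos (k := k) (x := x) sab (eq_size_rcons v w sab) sub_vw.
have xD : x \notin D v w.
  apply/negP => xD; apply/stuck/ext_vw/(extendable_Dunion sc_vw).
    by apply: dgame_leq _ win_vw; rewrite ltnS leq_addl.
  by rewrite Dunion_rcons // xD orbT.
have fr_vw := fresh_answer_rcons win_vw vU wU xD fr.
have [win'|/ext_vw//] := IH _ _ sc_vw win_vw fr_vw.
apply: dgame_subpos win'; first exact/eq_size_rcons/eq_size_rcons.
by move=> p; rewrite !mem_zip_rcons ?size_rcons ?sab // orbCA.
Qed.

Lemma extendable_of_dgame k a b x : swap_closed a b ->
  dgame (k + k).+1 a b -> extendable k a b x.
Proof.
move=> sc win; have iso := dgame_piso win; have sab := piso_size iso.
have win_k1 : dgame k.+1 a b by apply: dgame_leq _ win; rewrite ltnS leq_addl.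
case xa: (x \in a).
  have [y xy] := zip_partnerl sab xa.
  exists y, a, b; split=> // [|p]; first exact: dgame_leq _ win_k1.
  by rewrite mem_zip_rcons // => /orP[/eqP->|].
have [xU|xU] := boolP (Dunion a b x); first exact: extendable_Dunion xU.
suff [s fr] : exists s, fresh_answer a b x s.
  have [win'|//] := fresh_answer_wins sc win fr.
  exists s, (rcons a x), (rcons b s); split=> //.
  exact: swap_closed_fresh_answer iso sc fr.
case xb: (x \in b); last by exists x; split; rewrite ?xa ?xb //; left.
have [c cx] := zip_partnerr sab xb.
have cU : ~~ Dunion a b c by rewrite (Dunion_pair win cx).
exists c; split; rewrite ?xa //; last by right.
apply/negP => cb; have := sc c x cx cU xU.
by rewrite cb => /(_ isT)/mem_zipl; rewrite xa.
Qed.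

Fixpoint drounds m := if m is m'.+1 then (drounds m' + drounds m').+1 else 0.

Lemma ef_of_dgame m a b : swap_closed a b -> dgame (drounds m) a b -> ef m a b.
Proof.
elim: m a b => [|m IH] a b sc win /=; first exact: win.
have sab := piso_size (dgame_piso win).
split=> [x|y].
  have [y [a' [b' [sc' win' sub]]]] := extendable_of_dgame x sc win.
  exists y; apply: ef_subpos (IH _ _ sc' win') => //.
    exact: eq_size_rcons.
  exact: piso_size (dgame_piso win').
have [x [b' [a' [sc' win' sub]]]] :=
  extendable_of_dgame y (swap_closed_sym sc) (dgame_sym win).
exists x; apply: ef_sym; apply: ef_subpos (IH _ _ sc' win') => //.
  exact: eq_size_rcons.
exact: piso_size (dgame_piso win').
Qed.

End Games.

Theorem lemma6p1 :
  exists l : nat -> nat,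
    forall (m : nat) (T : finType) (L : finType) (e : rel T)
           (lab : L -> pred T),
      symmetric e -> irreflexive e ->
      forall u v : T,
        dgraph_connected e lab (l m) u v -> ef_equiv e lab m u v.
Proof.
exists drounds => m T L e lab e_sym _ u v.
elim=> [x y [_ [win|win]]|x|x y z _ xy _ yz].
- exact: (ef_of_dgame e_sym (@swap_closed1 _ e x y) win).
- exact/ef_sym/(ef_of_dgame e_sym (@swap_closed1 _ e y x) win).
- exact: ef_refl.
- exact: ef_trans xy yz.
Qed.
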